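(* For every $N_0\in\mathbb N_{\ge1}$ and every $d\in\mathbb N_{\ge 1}$ there is a one-sided recommendation problem $T_d$ (in the exposure setting) with $d+1$ items and $N_0(d+1)$ users such that, for every $\theta\in\Theta$, letting $u^\theta$ be the maximizer of $W_\theta$ over $\mathcal U$, and for every choice of $u^{\mathrm{qua},\beta}\in\mathcal U^{\mathrm{qua}}_\beta$ ($\beta>0$): (i) there exists $\beta>0$ such that $u^\theta_{\mathcal N}\succ_L u^{\mathrm{qua},\beta}_{\mathcal N}$ and $u^\theta_{\mathcal I}\succ_L u^{\mathrm{qua},\beta}_{\mathcal I}$; (ii) the limit $L_d=\lim_{\beta\to\infty}\frac{\sum_{i\in\mathcal N}u^{\mathrm{qua},\beta}_i}{\sum_{i\in\mathcal N}u^\theta_i}$ exists, does not depend on the choice of the maximizers, and $L_d\to\frac56$ as $d\to\infty$.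
   Context: One-sided exposure setting: users $\mathcal N=\{1,\dots,|\mathcal N|\}$, items $\mathcal I=\{|\mathcal N|+1,\dots,n\}$, $n=|\mathcal N|+|\mathcal I|$; exposure weights $v\in\mathbb R^{|\mathcal I|}$ with $v_1\ge\dots\ge v_{|\mathcal I|}\ge0$; values $\mu_{ij}\ge0$ for $i\in\mathcal N$, $j\in\mathcal I$. A ranking tensor $P=(P_{ijk})_{i\in\mathcal N,j\in\mathcal I,k\in[|\mathcal I|]}$ is such that each $P_i=(P_{ijk})_{j,k}$ is doubly stochastic; $\mathcal P$ is the set of ranking tensors, $P_{ij}v=\sum_kP_{ijk}v_k$. User utility $u_i(P)=\sum_{j\in\mathcal I}\mu_{ij}P_{ij}v$ ($i\in\mathcal N$); item utility (exposure) $u_j(P)=\sum_{i\in\mathcal N}P_{ij}v$ ($j\in\mathcal I$). $u(P)=(u_i(P))_{i\in[n]}$, $\mathcal U=\{u(P):P\in\mathcal P\}$, $u_{\mathcal N}=(u_i)_{i\in\mathcal N}$, $u_{\mathcal I}=(u_j)_{j\in\mathcal I}$. A recommendation problem is specified by $\mathcal N,\mathcal I,\mu,v$. Lorenz dominance: for $x\in\mathbb R^m$ with increasingly sorted entries $x_{(1)}\le\dots\le x_{(m)}$, let $\bar x_k=\sum_{l\le k}x_{(l)}$; $x\succeq_L y$ iff $\bar x_k\ge\bar y_k$ for all $k$; $x\succ_L y$ iff $x\succeq_L y$ and $\bar x_k>\bar y_k$ for some $k$. Welfare: $\psi(x,\alpha)=x^\alpha$ ($\alpha>0$), $\log x$ ($\alpha=0$),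 $-x^\alpha$ ($\alpha<0$), with $\psi(0,\alpha)=-\infty$ for $\alpha\le0$; $W_\theta(u)=(1-\lambda)\sum_{i\in\mathcal N}\psi(u_i,\alpha_1)+\lambda\sum_{j\in\mathcal I}\psi(u_j,\alpha_2)$ for $\theta=(\lambda,\alpha_1,\alpha_2)$; $\Theta=(0,1)\times(-\infty,1)^2$. Quality-weighted exposure: $q_j=\sum_{i\in\mathcal N}\mu_{ij}$, $Q=\sum_{j\in\mathcal I}q_j$, $E=|\mathcal N|\,\|v\|_1$, $D^{\mathrm{qua}}(u)=\frac1n\sum_{j\in\mathcal I}\big(u_j-\frac{q_jE}{Q}\big)^2$, $F^{\mathrm{qua}}_\beta(u)=\sum_{i\in\mathcal N}u_i-\beta\sqrt{D^{\mathrm{qua}}(u)}$, and $\mathcal U^{\mathrm{qua}}_\beta=\arg\max_{u\in\mathcal U}F^{\mathrm{qua}}_\beta(u)$. *)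

From HB Require Import structures.
From mathcomp Require Import all_boot all_order all_algebra.
From mathcomp Require Import all_classical all_reals all_analysis.
Set Implicit Arguments. Unset Strict Implicit. Unset Printing Implicit Defensive.
Import Order.TTheory GRing.Theory Num.Theory.
Import numFieldNormedType.Exports.
Local Open Scope ring_scope.

Section Recsys.
Variable R : realType.
(* m = |N| users, k = |I| items (= number of positions) *)
Variables (m k : nat).

Definition profile := (('I_m -> R) * ('I_k -> R))%type.

(* ranking tensor: P i j p = P_{ijp}, user i, item j, position p *)
Definition ranking_tensor (P : 'I_m -> 'I_k -> 'I_k -> R) : Prop :=
  forall i : 'I_m,
    (forall j p, 0 <= P i j p) /\
    (forall j, \sum_(p < k) P i j p = 1) /\
    (forall p, \sum_(j < k) P i j p = 1).

Variables (mu : 'I_m -> 'I_k -> R) (v : 'I_k -> R).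

Definition Pv (P : 'I_m -> 'I_k -> 'I_k -> R) i j := \sum_(p < k) P i j p * v p.

Definition user_util P (i : 'I_m) := \sum_(j < k) mu i j * Pv P i j.
Definition item_util P (j : 'I_k) := \sum_(i < m) Pv P i j.

Definition util P : profile := (user_util P, item_util P).

Definition Uset : set profile :=
  [set u | exists P, ranking_tensor P /\ u = util P].

Definition psi (x alpha : R) : \bar R :=
  if 0 < alpha then (x `^ alpha)%:E
  else if x <= 0 then -oo%E
  else if alpha == 0 then (ln x)%:E
  else (- x `^ alpha)%:E.

Definition W (lam a1 a2 : R) (u : profile) : \bar R :=
  (((1 - lam)%:E * (\sum_(i < m) psi (u.1 i) a1))
   + (lam%:E * (\sum_(j < k) psi (u.2 j) a2)))%E.

Definition in_Theta (lam a1 a2 : R) : Prop :=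
  0 < lam < 1 /\ a1 < 1 /\ a2 < 1.

Definition W_maximizer lam a1 a2 (u : profile) : Prop :=
  Uset u /\ forall u', Uset u' -> (W lam a1 a2 u' <= W lam a1 a2 u)%E.

Definition qual (j : 'I_k) := \sum_(i < m) mu i j.
Definition Qtot := \sum_(j < k) qual j.
Definition Etot := m%:R * \sum_(p < k) `|v p|.
Definition Dqua (u : profile) :=
  (m + k)%:R^-1 * \sum_(j < k) (u.2 j - qual j * Etot / Qtot) ^+ 2.
Definition Fqua (beta : R) (u : profile) :=
  \sum_(i < m) u.1 i - beta * Num.sqrt (Dqua u).
Definition Uqua (beta : R) : set profile :=
  [set u | Uset u /\ forall u', Uset u' -> Fqua beta u' <= Fqua beta u].

End Recsys.

Definition lorenz_sum (R : realType) (n : nat) (x : 'I_n -> R) (l : nat) : R :=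
  \sum_(i < l) nth 0 (sort <=%R [seq x i | i <- enum 'I_n]) i.

Definition lorenz_ge (R : realType) (n : nat) (x y : 'I_n -> R) : Prop :=
  forall l, (0 < l <= n)%N -> lorenz_sum y l <= lorenz_sum x l.

Definition lorenz_gt (R : realType) (n : nat) (x y : 'I_n -> R) : Prop :=
  lorenz_ge x y /\ exists l, (0 < l <= n)%N /\ lorenz_sum y l < lorenz_sum x l.

From HB Require Import structures.
From mathcomp Require Import all_boot all_order all_algebra.
From mathcomp Require Import all_classical all_reals all_analysis.
From mathcomp Require Import ring lra perm.
Import Order.TTheory GRing.Theory Num.Theory.
Import numFieldNormedType.Exports.
Local Open Scope classical_set_scope.
Local Open Scope ring_scope.
Set Implicit Arguments. Unset Strict Implicit. Unset Printing Implicit Defensive.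

(* Users come in d + 1 groups of N0; a user of group g values item g at 1, item 0
   at 1/2 (if g <> 0) and every other item at 0. Only the top slot carries
   exposure, so a ranking is described by the probabilities P_ij of showing item j
   first.

   Showing every user the own item gives each user utility 1, the maximum, and each
   item exposure N0, the average; by strict concavity of psi this profile is the
   unique maximizer of every W_theta.

   Quality weighting asks item 0 to receive t0 = N0 + delta, delta = N0 d^2/(3d+2).
   Moving exposure to item 0 costs a user half of it, while by Cauchy-Schwarz the
   deviation sqrt(D) is at least c |u_0 - t0|. Hence the objective is at most
   |N| - beta c delta (reached by the own-item ranking) when beta c <= 1/2, and at
   most |N| - delta/2 (reached by the exactly fair mixture) when beta c > 1/2, where
   every optimum loses exactly delta/2 of user utility and pushes some other item
   below N0. This gives the Lorenz dominance and the constant ratio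
   1 - d^2/(2(d+1)(3d+2)) --> 5/6. *)

Section LorenzSum.
Variable R : realType.

Definition sorted_values n (x : 'I_n -> R) := sort <=%R [seq x i | i <- enum 'I_n].

Lemma size_sorted_values n (x : 'I_n -> R) : size (sorted_values x) = n.
Proof. by rewrite size_sort size_map size_enum_ord. Qed.

Lemma nth_sorted_values n (x : 'I_n -> R) l :
  (l < n)%N -> exists j, nth 0 (sorted_values x) l = x j.
Proof.
move=> ln; have : nth 0 (sorted_values x) l \in sorted_values x.
  by rewrite mem_nth // size_sorted_values.
by rewrite mem_sort => /mapP [j _ ->]; exists j.
Qed.

Lemma lorenz_sum_full n (x : 'I_n -> R) : lorenz_sum x n = \sum_i x i.
Proof.
rewrite /lorenz_sum -/(sorted_values x).
have -> : \sum_(i < n) nth 0 (sorted_values x) i =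
          \sum_(i < size (sorted_values x)) nth 0 (sorted_values x) i.
  by rewrite size_sorted_values.
rewrite -(big_mkord xpredT (nth 0 (sorted_values x))) -(big_nth 0 xpredT id).
by rewrite (perm_big _ (permEl (perm_sort _ _))) big_map big_enum.
Qed.

Lemma lorenz_sum_le_const n (x : 'I_n -> R) c l :
  (forall i, x i <= c) -> (l <= n)%N -> lorenz_sum x l <= l%:R * c.
Proof.
move=> xc ln; rewrite /lorenz_sum mulr_natl -[in leRHS](card_ord l) -sumr_const.
apply: ler_sum => i _.
by have [j ->] := nth_sorted_values x (leq_trans (ltn_ord i) ln); apply: xc.
Qed.

Lemma lorenz_sum_const n (x : 'I_n -> R) c l :
  (forall i, x i = c) -> (l <= n)%N -> lorenz_sum x l = l%:R * c.
Proof.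
move=> xc ln; rewrite /lorenz_sum mulr_natl -[in RHS](card_ord l) -sumr_const.
apply: eq_bigr => i _.
by have [j ->] := nth_sorted_values x (leq_trans (ltn_ord i) ln); apply: xc.
Qed.

Lemma lorenz_sum1_le n (x : 'I_n -> R) j : lorenz_sum x 1 <= x j.
Proof.
rewrite /lorenz_sum big_ord1 -/(sorted_values x).
have : x j \in sorted_values x by rewrite mem_sort map_f ?mem_enum.
move=> /(nthP 0) [p p_lt <-].
by apply: (le_sorted_leq_nth 0 (sort_le_sorted _)); rewrite // inE (leq_ltn_trans _ p_lt).
Qed.

Lemma lorenz_sum_le_mean n (x : 'I_n -> R) l : (0 < l <= n)%N ->
  lorenz_sum x l * n%:R <= l%:R * \sum_i x i.
Proof.
move=> /andP [l_gt0 ln].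
rewrite -lorenz_sum_full /lorenz_sum -/(sorted_values x).
rewrite -!(big_mkord xpredT (nth 0 (sorted_values x))) (big_cat_nat (leq0n l) ln) /=.
set s := sorted_values x; set p := nth 0 s l.-1.
have s_mono i j : (i <= j)%N -> (j < n)%N -> nth 0 s i <= nth 0 s j.
  move=> ij jn; apply: (le_sorted_leq_nth 0 (sort_le_sorted _)) => //;
    by rewrite inE size_sorted_values ?(leq_ltn_trans ij).
have low : \sum_(0 <= i < l) nth 0 s i <= l%:R * p.
  rewrite mulr_natl -{2}(subn0 l) -sumr_const_nat; apply: ler_sum_nat => i /andP [_ il].
  by apply: s_mono; [rewrite -ltnS prednK | rewrite prednK // (leq_trans _ ln)].
have high : (n - l)%:R * p <= \sum_(l <= i < n) nth 0 s i.
  rewrite mulr_natl -sumr_const_nat; apply: ler_sum_nat => i /andP [li ijn].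
  by apply: s_mono => //; apply: leq_trans li; apply: leq_pred.
set A := \sum_(0 <= i < l) _ in low *; set B := \sum_(l <= i < n) _ in high *.
have n_split : (n%:R : R) = l%:R + (n - l)%:R by rewrite -natrD subnKC.
have := ler_wpM2r (ler0n _ (n - l)) low.
have := ler_wpM2l (ler0n _ l) high.
rewrite n_split; nra.
Qed.

Lemma lorenz_gt_const_sum_lt n (x y : 'I_n -> R) c :
  (forall i, x i = c) -> (forall i, y i <= c) -> \sum_i y i < n%:R * c ->
  lorenz_gt x y.
Proof.
move=> xc yc y_lt; split.
  by move=> l /andP [_ ln]; rewrite (lorenz_sum_const xc ln) lorenz_sum_le_const.
have n_gt0 : (0 < n)%N.
  by rewrite lt0n; apply: contraTneq y_lt => n0; subst n; rewrite big_ord0 mul0r ltxx.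
by exists n; rewrite n_gt0 leqnn lorenz_sum_full (lorenz_sum_const xc (leqnn n)); split.
Qed.

Lemma lorenz_gt_const_mean n (x y : 'I_n -> R) c j :
  (forall i, x i = c) -> \sum_i y i = n%:R * c -> y j < c -> lorenz_gt x y.
Proof.
move=> xc y_sum yj; have n_gt0 : (0 < n)%N := leq_ltn_trans (leq0n j) (ltn_ord j).
split.
  move=> l l_range; rewrite (lorenz_sum_const xc (proj2 (andP l_range))).
  rewrite -(ler_pM2r (ltr0Sn _ n.-1)) prednK // -mulrA [c * _]mulrC -y_sum.
  exact: lorenz_sum_le_mean.
exists 1%N; rewrite n_gt0 (lorenz_sum_const xc n_gt0) mul1r; split => //.
exact: le_lt_trans (lorenz_sum1_le y j) yj.
Qed.

End LorenzSum.

Section Concavity.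
Variable R : realType.

(* [psi] away from its junk value [-oo] at [0]. *)
Definition psi_real (x a : R) := if 0 < a then x `^ a else if a == 0 then ln x else - x `^ a.

Lemma psiE (x a : R) : 0 < x -> psi x a = (psi_real x a)%:E.
Proof.
by move=> x_gt0; rewrite /psi /psi_real; case: ifP; rewrite // leNgt x_gt0; case: ifP.
Qed.

Lemma powRE (t a : R) : 0 < t -> t `^ a = expR (a * ln t).
Proof. by move=> t_gt0; rewrite /powR gt_eqF. Qed.

Lemma ln_lt_sub1 (y : R) : 0 < y -> y != 1 -> ln y < y - 1.
Proof.
move=> y_gt0 y_neq1; have := @expR_gt1Dx R (ln y).
rewrite lnK ?posrE // ln_eq0; last by [].
by move=> /(_ y_neq1); lra.
Qed.

Lemma ln_le_sub1 (y : R) : 0 < y -> ln y <= y - 1.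
Proof.
move=> y_gt0; have [->|y_neq1] := eqVneq y 1; first by rewrite ln1 subrr.
exact/ltW/ln_lt_sub1.
Qed.

(* Strict weighted AM-GM, from [ln z <= z - 1] at [z = t / M] and [z = 1 / M]. *)
Lemma powR_lt_tangent (a t : R) : 0 < a < 1 -> 0 < t -> t != 1 ->
  t `^ a < 1 + a * (t - 1).
Proof.
move=> /andP [a_gt0 a_lt1] t_gt0 t_neq1; set M := 1 + a * (t - 1).
have M_gt0 : 0 < M by rewrite /M; nra.
have tM_gt0 : 0 < t / M by rewrite divr_gt0.
have iM_gt0 : 0 < M^-1 by rewrite invr_gt0.
have weights : a * (t / M - 1) + (1 - a) * (M^-1 - 1) = 0.
  by rewrite /M; field; rewrite -/M gt_eqF.
have strict : a * ln (t / M) + (1 - a) * ln M^-1 < 0.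
  rewrite -weights; have [tM1|tM_neq1] := eqVneq (t / M) 1.
  - have iM_neq1 : M^-1 != 1.
      by apply: contra_neq t_neq1 => iM1; move: tM1; rewrite iM1 mulr1.
    have := ln_lt_sub1 iM_gt0 iM_neq1; have := ln_le_sub1 tM_gt0.
    have : 0 < 1 - a by lra.
    nra.
  - have := ln_lt_sub1 tM_gt0 tM_neq1; have := ln_le_sub1 iM_gt0.
    have : 0 < 1 - a by lra.
    nra.
rewrite ln_div ?lnV ?posrE // in strict.
by rewrite powRE // -(lnK M_gt0) ltr_expR; lra.
Qed.

Lemma powR_gt_tangent (a t : R) : a < 0 -> 0 < t -> t != 1 -> 1 + a * (t - 1) < t `^ a.
Proof.
move=> a_lt0 t_gt0 t_neq1; rewrite powRE //.
have := expR_ge1Dx (a * ln t); have := ln_lt_sub1 t_gt0 t_neq1; nra.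
Qed.

Lemma psi_lt_tangent a c : a < 1 -> 0 < c -> exists s, 0 <= s /\
  forall x, 0 <= x -> x != c -> (psi x a < (psi_real c a + s * (x - c))%:E)%E.
Proof.
move=> a_lt1 c_gt0; have c_neq0 : c != 0 by rewrite gt_eqF.
have ca_gt0 : 0 < c `^ a by apply: powR_gt0.
have xc_neq1 x : x != c -> x / c != 1.
  by apply: contra_neq => xc1; rewrite -(divfK c_neq0 x) xc1 mul1r.
have x_split x : x = c * (x / c) by rewrite mulrC divfK.
have [a_gt0|a_lt0|->] := ltrgt0P a.
- exists (a * c `^ a / c); split; first by rewrite !mulr_ge0 ?invr_ge0 ?ltW.
  move=> x x_ge0 xc; rewrite /psi /psi_real a_gt0 lte_fin.
  have [->|x_neq0] := eqVneq x 0.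
    rewrite powR0 ?gt_eqF //.
    have -> : c `^ a + a * c `^ a / c * (0 - c) = (1 - a) * c `^ a by field.
    by rewrite mulr_gt0 // subr_gt0.
  have x_gt0 : 0 < x by rewrite lt0r x_neq0.
  rewrite [in X in X < _](x_split x) powRM ?ltW ?divr_gt0 //.
  have -> : c `^ a + a * c `^ a / c * (x - c) = c `^ a * (1 + a * (x / c - 1)) by field.
  by rewrite ltr_pM2l // powR_lt_tangent ?a_gt0 ?a_lt1 ?divr_gt0 ?xc_neq1.
- exists (- a * c `^ a / c); split; first by rewrite !mulr_ge0 ?invr_ge0 ?oppr_ge0 ?ltW.
  move=> x x_ge0 xc; rewrite /psi /psi_real (lt_gtF a_lt0) (negbTE (ltr0_neq0 a_lt0)).
  have [->|x_neq0] := eqVneq x 0; first by rewrite lexx ltNyr.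
  have x_gt0 : 0 < x by rewrite lt0r x_neq0.
  rewrite leNgt x_gt0 /= lte_fin [in X in X < _](x_split x) powRM ?ltW ?divr_gt0 //.
  have -> : - c `^ a + - a * c `^ a / c * (x - c) = - (c `^ a * (1 + a * (x / c - 1))).
    by field.
  by rewrite ltrN2 ltr_pM2l // powR_gt_tangent ?divr_gt0 ?xc_neq1.
- exists c^-1; split; first by rewrite invr_ge0 ltW.
  move=> x x_ge0 xc; rewrite /psi /psi_real ltxx eqxx.
  have [->|x_neq0] := eqVneq x 0; first by rewrite lexx ltNyr.
  have x_gt0 : 0 < x by rewrite lt0r x_neq0.
  rewrite leNgt x_gt0 /= lte_fin [in ln x](x_split x) lnM ?posrE ?divr_gt0 //.
  have -> : c^-1 * (x - c) = x / c - 1 by field.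
  by rewrite ltrD2l ln_lt_sub1 ?divr_gt0 ?xc_neq1.
Qed.

Lemma lte_leD_EFin (a b : \bar R) (x y : R) :
  (a < x%:E)%E -> (b <= y%:E)%E -> (a + b < (x + y)%:E)%E.
Proof.
case: b => [r| |] //= ax b_le; first by rewrite EFinD lte_leD.
by case: a ax => [r| |] //= _; apply: ltNyr.
Qed.

Lemma sum_psi_ub a c n (x : 'I_n -> R) : a < 1 -> 0 < c -> (forall i, 0 <= x i) ->
  \sum_i x i <= n%:R * c ->
  (\sum_i psi (x i) a <= (n%:R * psi_real c a)%:E)%E /\
  ((exists i, x i != c) -> (\sum_i psi (x i) a < (n%:R * psi_real c a)%:E)%E).
Proof.
move=> a_lt1 c_gt0 x_ge0 x_sum; have [s [s_ge0 tangent]] := psi_lt_tangent a_lt1 c_gt0.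
set line := fun i => psi_real c a + s * (x i - c).
have psi_le i : (psi (x i) a <= (line i)%:E)%E.
  have [xc|xc] := eqVneq (x i) c; last exact/ltW/tangent.
  by rewrite /line xc psiE // subrr mulr0 addr0.
have line_sum : \sum_i line i <= n%:R * psi_real c a.
  rewrite big_split /= -mulr_sumr sumrB !sumr_const card_ord -mulr_natl.
  have : s * (\sum_i x i - n%:R * c) <= 0 by rewrite mulr_ge0_le0 // subr_le0.
  by rewrite mulr_natl; lra.
split.
  apply: le_trans; first by apply: lee_sum => i _; apply: psi_le.
  by rewrite sumEFin lee_fin.
move=> [i0 xi0]; apply: lt_le_trans (_ : ((\sum_i line i)%:E <= _)%E); last by rewrite lee_fin.
rewrite (bigD1 i0) //= [X in (_ < X%:E)%E](bigD1 i0) //=.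
by apply: lte_leD_EFin; [exact: tangent | rewrite -sumEFin; apply: lee_sum].
Qed.

End Concavity.

Section WelfareBound.
Variables (R : realType) (m k : nat).

Lemma lee_convex_comb (l : R) A B X Y : 0 < l < 1 -> (A <= X%:E)%E -> (B <= Y%:E)%E ->
  ((1 - l)%:E * A + l%:E * B <= ((1 - l) * X + l * Y)%:E)%E.
Proof.
move=> /andP [l_gt0 l_lt1] AX BY; rewrite (EFinD ((1 - l) * X)) (EFinM (1 - l)) (EFinM l).
by apply: leeD; rewrite lee_pmul2l ?lte_fin ?subr_gt0.
Qed.

Lemma lte_convex_comb (l : R) A B X Y : 0 < l < 1 -> (A <= X%:E)%E -> (B <= Y%:E)%E ->
  (A < X%:E)%E \/ (B < Y%:E)%E ->
  ((1 - l)%:E * A + l%:E * B < ((1 - l) * X + l * Y)%:E)%E.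
Proof.
move=> /andP [l_gt0 l_lt1] AX BY AXY.
have scale_le w Z (C : \bar R) : 0 < w -> (C <= Z%:E)%E -> (w%:E * C <= (w * Z)%:E)%E.
  by move=> w_gt0 CZ; rewrite EFinM lee_pmul2l ?lte_fin.
have l'_gt0 : 0 < 1 - l by rewrite subr_gt0.
case: AXY => [AX_lt|BY_lt].
- apply: lte_leD_EFin; last exact: scale_le.
  by rewrite EFinM lte_pmul2l ?lte_fin.
- rewrite addeC (addrC ((1 - l) * X)); apply: lte_leD_EFin; last exact: scale_le.
  by rewrite EFinM lte_pmul2l ?lte_fin.
Qed.

Definition W_const (lam a1 a2 c1 c2 : R) : R :=
  (1 - lam) * (m%:R * psi_real c1 a1) + lam * (k%:R * psi_real c2 a2).

Lemma W_constant_profile lam a1 a2 c1 c2 (u : profile R m k) : 0 < c1 -> 0 < c2 ->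
  (forall i, u.1 i = c1) -> (forall j, u.2 j = c2) ->
  W lam a1 a2 u = (W_const lam a1 a2 c1 c2)%:E.
Proof.
move=> c1_gt0 c2_gt0 u1 u2; rewrite /W /W_const.
under eq_bigr do rewrite u1 psiE //.
under [X in (_ + _ * X)%E]eq_bigr do rewrite u2 psiE //.
rewrite !sumEFin !sumr_const !card_ord.
by rewrite -(mulr_natl (psi_real c1 a1)) -(mulr_natl (psi_real c2 a2)) -!EFinM -EFinD.
Qed.

Lemma W_le_const lam a1 a2 c1 c2 (u : profile R m k) : in_Theta lam a1 a2 ->
  0 < c1 -> 0 < c2 -> (forall i, 0 <= u.1 i) -> (forall j, 0 <= u.2 j) ->
  \sum_i u.1 i <= m%:R * c1 -> \sum_j u.2 j <= k%:R * c2 ->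
  (W lam a1 a2 u <= (W_const lam a1 a2 c1 c2)%:E)%E /\
  ((exists i, u.1 i != c1) \/ (exists j, u.2 j != c2) ->
   (W lam a1 a2 u < (W_const lam a1 a2 c1 c2)%:E)%E).
Proof.
move=> [lam01 [a1_lt1 a2_lt1]] c1_gt0 c2_gt0 u1_ge0 u2_ge0 u1_sum u2_sum.
have [users users_lt] := sum_psi_ub a1_lt1 c1_gt0 u1_ge0 u1_sum.
have [items items_lt] := sum_psi_ub a2_lt1 c2_gt0 u2_ge0 u2_sum.
split; first exact: lee_convex_comb.
move=> nonconst; apply: lte_convex_comb => //.
by case: nonconst => [/users_lt|/items_lt]; [left|right].
Qed.

End WelfareBound.

Section FiniteSums.
Variable R : realType.

Lemma sqr_sum_le n (a : 'I_n -> R) : (\sum_i a i) ^+ 2 <= n%:R * \sum_i a i ^+ 2.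
Proof.
case: n a => [|n] a; first by rewrite !big_ord0 expr0n /= mul0r.
set S := \sum_i a i; set T := \sum_i a i ^+ 2.
have dev_ge0 : 0 <= \sum_i (n.+1%:R * a i - S) ^+ 2 by apply: sumr_ge0 => i _; apply: sqr_ge0.
have dev_eq : \sum_i (n.+1%:R * a i - S) ^+ 2 = n.+1%:R * (n.+1%:R * T - S ^+ 2).
  rewrite (eq_bigr (fun i => n.+1%:R ^+ 2 * a i ^+ 2 - 2 * n.+1%:R * S * a i + S ^+ 2));
    last by move=> i _; ring.
  rewrite !big_split /= sumrN -!mulr_sumr sumr_const card_ord -/S -/T mulr_natr; ring.
by rewrite dev_eq pmulr_rge0 ?ltr0Sn // subr_ge0 in dev_ge0.
Qed.

Lemma exists_lt_of_sum_lt n (y : 'I_n -> R) c :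
  \sum_i y i < n%:R * c -> exists i, y i < c.
Proof.
move=> y_sum; have [/existsP //|/existsPn y_ge] := boolP [exists i, y i < c].
move: y_sum; rewrite ltNge => /negP []; rewrite mulr_natl -[in leLHS](card_ord n).
by rewrite -sumr_const; apply: ler_sum => i _; rewrite leNgt y_ge.
Qed.

End FiniteSums.

(* Upper bounds on [S - r] when [S <= min (M, M - (y - n) / 2)] and the penalty [r]
   is at least [b |y - t|], with [n < t]: the optimum sits at [y = n] for [b <= 1/2]
   and at [y = t] for [b > 1/2]. *)
Section PenalizedTotal.
Variables (R : realType) (M S y n t b r : R).

Lemma penalized_total_le_small : S <= M -> S <= M - (y - n) / 2 ->
  b * `|y - t| <= r -> n < t -> 0 <= b -> b <= 2^-1 -> S - r <= M - b * (t - n).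
Proof.
move=> S_le S_le_y r_ge nt b_ge0 b_le.
have slack : 0 <= (2^-1 - b) * (t - n) by apply: mulr_ge0; rewrite subr_ge0 // ltW.
have [yt|yt] := lerP t y.
- rewrite ger0_norm ?subr_ge0 // in r_ge.
  have : 0 <= b * (y - t) by apply: mulr_ge0; rewrite ?subr_ge0.
  lra.
- rewrite ltr0_norm ?subr_lt0 // in r_ge.
  have [ny|yn] := lerP n y; nra.
Qed.

Lemma penalized_total_le_large : S <= M -> S <= M - (y - n) / 2 ->
  b * `|y - t| <= r -> n < t -> 2^-1 < b -> S - r <= M - (t - n) / 2.
Proof.
move=> S_le S_le_y r_ge nt b_gt.
have [yt|yt] := lerP t y; first by rewrite ger0_norm ?subr_ge0 // in r_ge; nra.
rewrite ltr0_norm ?subr_lt0 // in r_ge.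
have [ny|yn] := lerP n y; nra.
Qed.

Lemma penalized_total_eq_large : S <= M -> S <= M - (y - n) / 2 ->
  b * `|y - t| <= r -> n < t -> 2^-1 < b -> M - (t - n) / 2 <= S - r ->
  S = M - (t - n) / 2 /\ t <= y.
Proof.
move=> S_le S_le_y r_ge nt b_gt opt.
have [yt|yt] := lerP t y; first by rewrite ger0_norm ?subr_ge0 // in r_ge; split; nra.
rewrite ltr0_norm ?subr_lt0 // in r_ge.
have [ny|yn] := lerP n y; nra.
Qed.

End PenalizedTotal.

Definition ratio_limit (R : realType) (d : nat) : R :=
  1 - d%:R ^+ 2 / (2 * (d%:R + 1) * (3 * d%:R + 2)).

Lemma ratio_limit_cvg (R : realType) : ratio_limit R d @[d --> \oo] --> (5 / 6 : R).
Proof.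
apply/cvgrPdist_lt => e e_gt0; apply: filterS (nbhs_infty_gtr e^-1) => d d_gt.
have d_ge0 : (0 : R) <= d%:R by apply: ler0n.
have ed_gt1 : 1 < e * d%:R by rewrite -ltr_pdivrMl // mulr1.
have -> : 5 / 6 - ratio_limit R d =
          - ((5 * d%:R + 2) / (6 * (d%:R + 1) * (3 * d%:R + 2))).
  by rewrite /ratio_limit; field; rewrite !gt_eqF //; nra.
rewrite normrN ger0_norm; last by apply: divr_ge0; nra.
by rewrite ltr_pdivrMr; nra.
Qed.

Section Instance.
Variables (R : realType) (N0 d : nat).
Local Notation m := (N0 * d.+1)%N.
Local Notation k := d.+1.

Definition group_of (i : 'I_m) : 'I_k := inord (i %/ N0).

Definition mu_ex (i : 'I_m) (j : 'I_k) : R :=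
  if j == group_of i then 1 else if j == ord0 then 2^-1 else 0.

Definition v_top (p : 'I_k) : R := if p == ord0 then 1 else 0.

Local Notation mu := mu_ex.
Local Notation v := v_top.

Lemma mu_ex_ge0 i j : 0 <= mu i j.
Proof. by rewrite /mu_ex; case: ifP => // _; case: ifP. Qed.

Lemma mu_ex_le1 i j : mu i j <= 1.
Proof. by rewrite /mu_ex; case: ifP => // _; case: ifP => _; lra. Qed.

Lemma Pv_top (P : 'I_m -> 'I_k -> 'I_k -> R) i j : Pv v P i j = P i j ord0.
Proof.
rewrite /Pv (bigD1 ord0) //= /v_top eqxx mulr1 big1 ?addr0 // => p p_neq0.
by rewrite (negbTE p_neq0) mulr0.
Qed.

Lemma sum_eq_indicator (c : 'I_k) : \sum_(p < k) ((p == c)%:R : R) = 1.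
Proof. by rewrite (bigD1 c) //= eqxx big1 ?addr0 // => p /negbTE ->. Qed.

Hypothesis N0_gt0 : (0 < N0)%N.

Lemma sum_nat_divn n (f : nat -> R) :
  \sum_(0 <= i < N0 * n) f (i %/ N0)%N = N0%:R * \sum_(0 <= g < n) f g.
Proof.
elim: n => [|n IHn]; first by rewrite muln0 !big_geq // mulr0.
rewrite (@big_cat_nat _ _ _ (N0 * n)) //=; last by rewrite leq_mul2l leqnSn orbT.
rewrite IHn big_nat_recr //= mulrDr; congr (_ + _).
rewrite -{1}(add0n (N0 * n)%N) big_addn mulnS addnK.
rewrite (@eq_big_nat _ _ _ 0 N0 _ (fun=> f n)); last first.
  by move=> i /andP [_ iN0]; rewrite mulnC divnDMl // divn_small.
by rewrite sumr_const_nat subn0 mulr_natl.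
Qed.

Lemma sum_group_of (F : 'I_k -> R) : \sum_(i < m) F (group_of i) = N0%:R * \sum_j F j.
Proof.
rewrite -(big_mkord xpredT (fun i => F (inord (i %/ N0)))).
rewrite (sum_nat_divn k (fun g => F (inord g))) big_mkord.
by congr (_ * _); apply: eq_bigr => j _; rewrite inord_val.
Qed.

Section RankingBounds.
Variable P : 'I_m -> 'I_k -> 'I_k -> R.
Hypothesis P_ranking : ranking_tensor P.

Lemma top_ge0 i j : 0 <= P i j ord0.
Proof. by have [P_ge0 _] := P_ranking i. Qed.

Lemma sum_top i : \sum_j P i j ord0 = 1.
Proof. by have [_ [_ ->]] := P_ranking i. Qed.

Lemma top_le1 i j : P i j ord0 <= 1.
Proof. by rewrite -(sum_top i) (bigD1 j) //= lerDl sumr_ge0 // => l _; apply: top_ge0. Qed.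

Lemma user_util_ge0 i : 0 <= user_util mu v P i.
Proof. by apply: sumr_ge0 => j _; rewrite Pv_top mulr_ge0 ?mu_ex_ge0 ?top_ge0. Qed.

Lemma user_util_le1 i : user_util mu v P i <= 1.
Proof.
rewrite /user_util -(sum_top i); apply: ler_sum => j _.
by rewrite Pv_top ler_piMl ?top_ge0 ?mu_ex_le1.
Qed.

Lemma item_util_ge0 j : 0 <= item_util v P j.
Proof. by apply: sumr_ge0 => i _; rewrite Pv_top top_ge0. Qed.

Lemma sum_item_util : \sum_j item_util v P j = m%:R.
Proof.
rewrite /item_util exchange_big /= -[m in RHS]card_ord -sumr_const.
by apply: eq_bigr => i _; rewrite -(sum_top i); apply: eq_bigr => j _; rewrite Pv_top.
Qed.

Lemma user_util_le_top i : user_util mu v P i <= 1 - (1 - mu i ord0) * P i ord0 ord0.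
Proof.
rewrite /user_util -{1}(sum_top i) (bigD1 ord0) //= [X in _ <= X - _](bigD1 ord0) //= Pv_top.
have : \sum_(j | j != ord0) mu i j * Pv v P i j <= \sum_(j | j != ord0) P i j ord0.
  by apply: ler_sum => j _; rewrite Pv_top ler_piMl ?top_ge0 ?mu_ex_le1.
lra.
Qed.

Lemma sum_user_util_le :
  \sum_i user_util mu v P i <= m%:R - (item_util v P ord0 - N0%:R) / 2.
Proof.
have cost i : 2^-1 * (P i ord0 ord0 - (group_of i == ord0)%:R) <=
              (1 - mu i ord0) * P i ord0 ord0.
  rewrite /mu_ex eq_sym eqxx; have := top_le1 i ord0; have := top_ge0 i ord0.
  by case: (ord0 == group_of i) => /=; lra.
have own_group : \sum_i ((group_of i == ord0)%:R : R) = N0%:R.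
  by rewrite (sum_group_of (fun g => (g == ord0)%:R)) sum_eq_indicator mulr1.
have top_exposure : item_util v P ord0 = \sum_i P i ord0 ord0.
  by apply: eq_bigr => i _; rewrite Pv_top.
have users : \sum_i user_util mu v P i <= \sum_i (1 - (1 - mu i ord0) * P i ord0 ord0).
  by apply: ler_sum => i _; apply: user_util_le_top.
have costs : \sum_i 2^-1 * (P i ord0 ord0 - (group_of i == ord0)%:R) <=
             \sum_i (1 - mu i ord0) * P i ord0 ord0 by apply: ler_sum => i _; apply: cost.
rewrite -mulr_sumr sumrB own_group -top_exposure in costs.
rewrite sumrB sumr_const card_ord in users.
lra.
Qed.

End RankingBounds.

(* With probability [s] the transposition moving the own item to the top is applied
   to the identity ranking. *)
Definition mix_ranking (s : R) (i : 'I_m) (j p : 'I_k) : R :=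
  s * (j == tperm ord0 (group_of i) p)%:R + (1 - s) * (j == p)%:R.

Lemma mix_ranking_tensor s : 0 <= s <= 1 -> ranking_tensor (mix_ranking s).
Proof.
move=> /andP [s_ge0 s_le1] i; split; [|split].
- by move=> j p; rewrite /mix_ranking addr_ge0 // mulr_ge0 ?subr_ge0.
- move=> j; rewrite big_split /= -!mulr_sumr.
  under eq_bigr do rewrite -(canF_eq (tpermK _ _)) eq_sym.
  under [X in _ + _ * X]eq_bigr do rewrite eq_sym.
  by rewrite !sum_eq_indicator; lra.
- by move=> p; rewrite big_split /= -!mulr_sumr !sum_eq_indicator; lra.
Qed.

Lemma Pv_mix s i j :
  Pv v (mix_ranking s) i j = s * (j == group_of i)%:R + (1 - s) * (j == ord0)%:R.
Proof. by rewrite Pv_top /mix_ranking tpermL. Qed.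

Lemma user_util_mix s i : user_util mu v (mix_ranking s) i = s + (1 - s) * mu i ord0.
Proof.
rewrite /user_util (eq_bigr (fun j => s * (mu i j * (j == group_of i)%:R) +
                                       (1 - s) * (mu i j * (j == ord0)%:R))); last first.
  by move=> j _; rewrite Pv_mix; ring.
rewrite big_split /= -!mulr_sumr (bigD1 (group_of i)) //= big1; last first.
  by move=> j /negbTE ->; rewrite mulr0.
rewrite (bigD1 ord0) //= [X in _ + _ * (_ + X)]big1; last first.
  by move=> j /negbTE ->; rewrite mulr0.
have -> : mu i (group_of i) = 1 by rewrite /mu_ex eqxx.
by rewrite eqxx /= mul1r mulr1n !addr0 !mulr1.
Qed.

Lemma item_util_mix s j :
  item_util v (mix_ranking s) j = s * N0%:R + (1 - s) * m%:R * (j == ord0)%:R.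
Proof.
rewrite /item_util (eq_bigr (fun i => s * (group_of i == j)%:R + (1 - s) * (j == ord0)%:R));
  last by move=> i _; rewrite Pv_mix eq_sym.
rewrite big_split /= -mulr_sumr (sum_group_of (fun g => (g == j)%:R)).
by rewrite sum_eq_indicator sumr_const card_ord mulr_natr; ring.
Qed.

Hypothesis d_gt0 : (0 < d)%N.
Local Notation n0 := (N0%:R : R).
Local Notation dd := (d%:R : R).

Lemma n0_gt0 : 0 < n0. Proof. by rewrite ltr0n. Qed.
Lemma dd_gt0 : 0 < dd. Proof. by rewrite ltr0n. Qed.
Lemma mE : (m%:R : R) = n0 * (dd + 1).
Proof. by rewrite natrM -addn1 natrD. Qed.

Lemma qual_top : qual mu ord0 = n0 * (1 + dd / 2).
Proof.
pose w (g : 'I_k) : R := if ord0 == g then 1 else 2^-1.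
rewrite /qual (eq_bigr (fun i => w (group_of i))); last by move=> i _; rewrite /mu_ex eqxx.
rewrite (sum_group_of w) big_ord_recl /w /= sumr_const card_ord.
by rewrite -[_ *+ d]mulr_natl mulrC.
Qed.

Lemma qual_other j : j != ord0 -> qual mu j = n0.
Proof.
move=> j_neq0; rewrite /qual (eq_bigr (fun i => (group_of i == j)%:R)).
  by rewrite (sum_group_of (fun g => (g == j)%:R)) sum_eq_indicator mulr1.
by move=> i _; rewrite /mu_ex (negbTE j_neq0) eq_sym; case: ifP.
Qed.

Lemma Qtot_ex : Qtot mu = n0 * (3 * dd + 2) / 2.
Proof.
rewrite /Qtot big_ord_recl qual_top (eq_bigr (fun=> n0)); last first.
  by move=> i _; rewrite qual_other // eq_sym neq_lift.
by rewrite sumr_const card_ord -mulr_natr; field.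
Qed.

Lemma Etot_ex : Etot m v = m%:R.
Proof.
rewrite /Etot (bigD1 ord0) //= big1 => [|p p_neq0]; last first.
  by rewrite /v_top (negbTE p_neq0) normr0.
by rewrite /v_top eqxx normr1 addr0 mulr1.
Qed.

Definition target_top : R := n0 * (dd + 2) * (dd + 1) / (3 * dd + 2).
Definition target_other : R := 2 * n0 * (dd + 1) / (3 * dd + 2).
Definition excess : R := n0 * dd ^+ 2 / (3 * dd + 2).
(* Probability of showing the own item that realizes the target exposures. *)
Definition fair_mix : R := 2 * (dd + 1) / (3 * dd + 2).

Lemma den_gt0 : 0 < 3 * dd + 2.
Proof. by have := dd_gt0; lra. Qed.

Lemma target_topE : qual mu ord0 * Etot m v / Qtot mu = target_top.
Proof.
rewrite qual_top Etot_ex Qtot_ex mE /target_top; field.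
by rewrite !gt_eqF ?den_gt0 ?n0_gt0.
Qed.

Lemma target_otherE j : j != ord0 -> qual mu j * Etot m v / Qtot mu = target_other.
Proof.
move=> j_neq0; rewrite qual_other // Etot_ex Qtot_ex mE /target_other; field.
by rewrite !gt_eqF ?den_gt0 ?n0_gt0.
Qed.

Lemma sum_targets : target_top + dd * target_other = m%:R.
Proof. by rewrite mE /target_top /target_other; field; rewrite gt_eqF ?den_gt0. Qed.

Lemma target_top_sub : target_top - n0 = excess.
Proof. by rewrite /target_top /excess; field; rewrite gt_eqF ?den_gt0. Qed.

Lemma excess_gt0 : 0 < excess.
Proof. by rewrite /excess divr_gt0 ?mulr_gt0 ?exprn_gt0 ?n0_gt0 ?dd_gt0 ?den_gt0. Qed.

Lemma fair_mix01 : 0 <= fair_mix <= 1.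
Proof.
have := den_gt0; have := dd_gt0 => dd_pos den_pos.
by rewrite /fair_mix divr_ge0 ?ler_pdivrMr //=; lra.
Qed.

(* Cauchy-Schwarz on the [d] items other than [0], whose deviations sum to the
   opposite of the deviation of item [0]. *)
Lemma sum_sqr_deviation_ge (y : 'I_k -> R) : \sum_j y j = m%:R ->
  (1 + dd^-1) * (y ord0 - target_top) ^+ 2 <=
  \sum_j (y j - qual mu j * Etot m v / Qtot mu) ^+ 2.
Proof.
move=> y_sum; rewrite big_ord_recl target_topE.
under eq_bigr do rewrite target_otherE ?(eq_sym _ ord0) ?neq_lift //.
rewrite big_ord_recl in y_sum.
have others : \sum_(i < d) (y (lift ord0 i) - target_other) = target_top - y ord0.
  by rewrite sumrB sumr_const card_ord -mulr_natl; have := sum_targets; lra.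
have := sqr_sum_le (fun i => y (lift ord0 i) - target_other).
rewrite others -sqrrN opprB -ler_pdivrMl ?dd_gt0 // mulrC.
have -> : (1 + dd^-1) * (y ord0 - target_top) ^+ 2 =
          (y ord0 - target_top) ^+ 2 + (y ord0 - target_top) ^+ 2 / dd.
  by field; rewrite gt_eqF ?dd_gt0.
lra.
Qed.

Definition dev_coef : R := (1 + dd^-1) / (m + k)%:R.

Lemma dev_coef_gt0 : 0 < dev_coef.
Proof. by rewrite /dev_coef divr_gt0 // ?ltr0n ?addn_gt0 // addr_gt0 // invr_gt0 dd_gt0. Qed.

Lemma sqrt_Dqua_ge u : Uset mu v u ->
  Num.sqrt dev_coef * `|u.2 ord0 - target_top| <= Num.sqrt (Dqua mu v u).
Proof.
move=> [P [P_ranking ->]] /=.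
rewrite -sqrtr_sqr -sqrtrM ?(ltW dev_coef_gt0) // ler_sqrt; last first.
  by rewrite mulr_ge0 ?invr_ge0 // sumr_ge0 // => j _; apply: sqr_ge0.
rewrite /Dqua /dev_coef mulrAC [leRHS]mulrC ler_wpM2r ?invr_ge0 //.
exact: sum_sqr_deviation_ge (sum_item_util P_ranking).
Qed.

Definition u_own := util mu v (mix_ranking 1).
Definition u_fair := util mu v (mix_ranking fair_mix).

Lemma u_own_Uset : Uset mu v u_own.
Proof. by exists (mix_ranking 1); split => //; apply: mix_ranking_tensor; rewrite lexx ler01. Qed.

Lemma u_fair_Uset : Uset mu v u_fair.
Proof.
by exists (mix_ranking fair_mix); split => //; apply/mix_ranking_tensor/fair_mix01.
Qed.

Lemma u_own_users i : u_own.1 i = 1.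
Proof. by rewrite /= user_util_mix subrr mul0r addr0. Qed.

Lemma u_own_items j : u_own.2 j = n0.
Proof. by rewrite /= item_util_mix subrr !mul0r addr0 mul1r. Qed.

Lemma sqrt_Dqua_u_own : Num.sqrt (Dqua mu v u_own) = Num.sqrt dev_coef * excess.
Proof.
have -> : Dqua mu v u_own = dev_coef * excess ^+ 2.
  rewrite /Dqua big_ord_recl target_topE.
  under eq_bigr do rewrite target_otherE ?(eq_sym _ ord0) ?neq_lift // u_own_items.
  rewrite u_own_items sumr_const card_ord -mulr_natl.
  rewrite /dev_coef /excess /target_top /target_other.
  have := n0_gt0; have := dd_gt0; have := den_gt0 => den_pos dd_pos n0_pos.
  by field; rewrite !gt_eqF //; nra.
by rewrite sqrtrM ?(ltW dev_coef_gt0) // sqrtr_sqr gtr0_norm ?excess_gt0.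
Qed.

Lemma u_fair_items j : u_fair.2 j = qual mu j * Etot m v / Qtot mu.
Proof.
rewrite /= item_util_mix; have [->|j_neq0] := eqVneq j ord0.
  by rewrite target_topE mE /fair_mix /target_top /=; field; rewrite gt_eqF ?den_gt0.
rewrite target_otherE // mulr0 addr0 /fair_mix /target_other.
by field; rewrite gt_eqF ?den_gt0.
Qed.

Lemma Dqua_u_fair : Dqua mu v u_fair = 0.
Proof. by rewrite /Dqua big1 ?mulr0 // => j _; rewrite u_fair_items subrr expr0n. Qed.

Lemma sum_u_fair_users : \sum_i u_fair.1 i = m%:R - excess / 2.
Proof.
rewrite /= (eq_bigr (fun i => fair_mix + (1 - fair_mix) * mu i ord0)); last first.
  by move=> i _; apply: user_util_mix.
rewrite big_split /= sumr_const card_ord -mulr_sumr -/(qual mu ord0) qual_top -mulr_natl mE.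
by rewrite /fair_mix /excess; field; rewrite gt_eqF ?den_gt0.
Qed.

End Instance.

Lemma v_top_ge0 (R : realType) d (p : 'I_d.+1) : 0 <= v_top R p.
Proof. by rewrite /v_top; case: ifP. Qed.

Lemma v_top_nonincr (R : realType) d (p q : 'I_d.+1) :
  (p <= q)%N -> v_top R q <= v_top R p.
Proof.
rewrite /v_top; have [->|_] := eqVneq q ord0; last by case: ifP.
by move=> p_le0; rewrite (_ : p = ord0) ?eqxx //; apply/val_inj/eqP; rewrite -leqn0.
Qed.

Section Optima.
Variables (R : realType) (N0 d : nat).
Hypotheses (N0_gt0 : (0 < N0)%N) (d_gt0 : (0 < d)%N).
Local Notation m := (N0 * d.+1)%N.
Local Notation k := d.+1.
Local Notation mu := (@mu_ex R N0 d).
Local Notation v := (@v_top R d).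
Local Notation n0 := (N0%:R : R).
Local Notation u_own := (u_own R N0 d).
Local Notation u_fair := (u_fair R N0 d).
Local Notation c := (Num.sqrt (dev_coef R N0 d)).
Local Notation t0 := (target_top R N0 d).
Local Notation del := (excess R N0 d).

Lemma c_gt0 : 0 < c.
Proof. by rewrite sqrtr_gt0 dev_coef_gt0. Qed.

Lemma target_top_gt : n0 < t0.
Proof. by rewrite -subr_gt0 target_top_sub ?excess_gt0. Qed.

Lemma Uset_users_le1 u : Uset mu v u -> forall i, u.1 i <= 1.
Proof. by move=> [P [P_ranking ->]] i; apply: user_util_le1. Qed.

Lemma Uset_sum_items u : Uset mu v u -> \sum_j u.2 j = m%:R.
Proof. by move=> [P [P_ranking ->]]; apply: sum_item_util. Qed.

Lemma W_le_u_own lam a1 a2 u : in_Theta lam a1 a2 -> Uset mu v u ->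
  (W lam a1 a2 u <= W lam a1 a2 u_own)%E /\
  ((exists i, u.1 i != 1) \/ (exists j, u.2 j != n0) ->
   (W lam a1 a2 u < W lam a1 a2 u_own)%E).
Proof.
move=> lam_Theta [P [P_ranking ->]].
have users_sum : \sum_i user_util mu v P i <= m%:R * 1.
  rewrite mulr1 -[m in leRHS]card_ord -sumr_const.
  by apply: ler_sum => i _; apply: user_util_le1.
have items_sum : \sum_j item_util v P j <= k%:R * n0.
  by rewrite (sum_item_util P_ranking) mE mulrC -natr1.
rewrite (W_constant_profile _ _ _ ltr01 (n0_gt0 R N0_gt0) (@u_own_users R N0 d));
  last exact: u_own_items.
exact: (W_le_const (u := util mu v P)) lam_Theta ltr01 (n0_gt0 R N0_gt0)
  (user_util_ge0 P_ranking) (item_util_ge0 P_ranking) users_sum items_sum.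
Qed.

Lemma W_maximizer_u_own lam a1 a2 : in_Theta lam a1 a2 -> W_maximizer mu v lam a1 a2 u_own.
Proof.
move=> lam_Theta; split=> [|u u_U]; first exact: u_own_Uset.
by case: (W_le_u_own lam_Theta u_U).
Qed.

Lemma W_maximizerE lam a1 a2 u : in_Theta lam a1 a2 -> W_maximizer mu v lam a1 a2 u ->
  (forall i, u.1 i = 1) /\ (forall j, u.2 j = n0).
Proof.
move=> lam_Theta [u_U u_max]; have own_le := u_max _ (u_own_Uset R N0 d).
have [_ strict] := W_le_u_own lam_Theta u_U.
have not_nonconst : ~ ((exists i, u.1 i != 1) \/ (exists j, u.2 j != n0)).
  by move=> /strict /lt_le_trans /(_ own_le); rewrite ltxx.
split=> [i|j].
- by have [//|neq] := eqVneq (u.1 i) 1; case: not_nonconst; left; exists i.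
- by have [//|neq] := eqVneq (u.2 j) n0; case: not_nonconst; right; exists j.
Qed.

Lemma Uset_Fqua_bounds u : Uset mu v u ->
  \sum_i u.1 i <= m%:R /\ \sum_i u.1 i <= m%:R - (u.2 ord0 - n0) / 2 /\
  c * `|u.2 ord0 - t0| <= Num.sqrt (Dqua mu v u).
Proof.
move=> u_U; have dev := sqrt_Dqua_ge N0_gt0 d_gt0 u_U.
have users_le1 := Uset_users_le1 u_U.
case: u_U users_le1 dev => P [P_ranking ->] users_le1 dev.
split; last by split=> //; apply: sum_user_util_le.
by rewrite -[m in leRHS]card_ord -sumr_const; apply: ler_sum => i _; apply: users_le1.
Qed.

Lemma Fqua_u_own beta : Fqua mu v beta u_own = m%:R - beta * c * del.
Proof.
rewrite /Fqua (sqrt_Dqua_u_own R N0_gt0 d_gt0) (eq_bigr (fun=> 1)) => [|i _]; last first.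
  exact: u_own_users.
by rewrite sumr_const card_ord mulrA.
Qed.

Lemma Fqua_u_fair beta : Fqua mu v beta u_fair = m%:R - del / 2.
Proof.
rewrite /Fqua (Dqua_u_fair R N0_gt0 d_gt0) sqrtr0 mulr0 subr0.
exact: sum_u_fair_users.
Qed.

Lemma penalty_ge beta u : 0 <= beta -> Uset mu v u ->
  beta * c * `|u.2 ord0 - t0| <= beta * Num.sqrt (Dqua mu v u).
Proof. by move=> beta_ge0 /Uset_Fqua_bounds [_ [_ dev]]; rewrite -mulrA ler_wpM2l. Qed.

Lemma Fqua_le_u_own beta u : 0 <= beta -> beta * c <= 2^-1 -> Uset mu v u ->
  Fqua mu v beta u <= Fqua mu v beta u_own.
Proof.
move=> beta_ge0 small u_U; have [S_le [S_le_y _]] := Uset_Fqua_bounds u_U.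
rewrite Fqua_u_own -(target_top_sub R N0 d_gt0).
by apply: penalized_total_le_small (penalty_ge beta_ge0 u_U) target_top_gt _ small;
  rewrite ?mulr_ge0 ?(ltW c_gt0).
Qed.

Lemma Fqua_le_u_fair beta u : 0 <= beta -> 2^-1 < beta * c -> Uset mu v u ->
  Fqua mu v beta u <= Fqua mu v beta u_fair.
Proof.
move=> beta_ge0 large u_U; have [S_le [S_le_y _]] := Uset_Fqua_bounds u_U.
rewrite Fqua_u_fair -(target_top_sub R N0 d_gt0).
exact: penalized_total_le_large (penalty_ge beta_ge0 u_U) target_top_gt large.
Qed.

Lemma Uqua_exists beta : 0 < beta -> exists u, Uqua mu v beta u.
Proof.
move=> beta_gt0; have [small|large] := lerP (beta * c) 2^-1.
- exists u_own; split; first exact: u_own_Uset.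
  by move=> u' u'_U; apply: Fqua_le_u_own => //; apply: ltW.
- exists u_fair; split; first exact: u_fair_Uset.
  by move=> u' u'_U; apply: Fqua_le_u_fair => //; apply: ltW.
Qed.

Lemma Uqua_large beta u : c^-1 < beta -> Uqua mu v beta u ->
  \sum_i u.1 i = m%:R - del / 2 /\ t0 <= u.2 ord0.
Proof.
move=> beta_gt [u_U u_max].
have beta_gt0 : 0 < beta by apply: lt_trans beta_gt; rewrite invr_gt0 c_gt0.
have large : 2^-1 < beta * c.
  have : 1 < beta * c by rewrite -ltr_pdivrMr ?c_gt0 // div1r.
  lra.
have [S_le [S_le_y _]] := Uset_Fqua_bounds u_U.
have := u_max _ (u_fair_Uset R N0 d_gt0); rewrite Fqua_u_fair -(target_top_sub R N0 d_gt0).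
rewrite /Fqua => opt.
exact: penalized_total_eq_large (penalty_ge (ltW beta_gt0) u_U) target_top_gt large opt.
Qed.

(* Beyond [1 / c] the users lose [del / 2] in total and some item other than [0]
   falls below [n0]. *)
Lemma Uqua_large_lorenz lam a1 a2 u_th beta u : in_Theta lam a1 a2 ->
  W_maximizer mu v lam a1 a2 u_th -> c^-1 < beta -> Uqua mu v beta u ->
  lorenz_gt u_th.1 u.1 /\ lorenz_gt u_th.2 u.2.
Proof.
move=> lam_Theta u_th_max beta_gt u_Uqua.
have [th_users th_items] := W_maximizerE lam_Theta u_th_max.
have [users_sum t0_le] := Uqua_large beta_gt u_Uqua.
have u_U : Uset mu v u by case: u_Uqua.
split.
  apply: lorenz_gt_const_sum_lt th_users (Uset_users_le1 u_U) _.
  by rewrite users_sum mulr1; have := excess_gt0 R N0_gt0 d_gt0; lra.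
have items_sum := Uset_sum_items u_U; rewrite big_ord_recl in items_sum.
have [j item_lt] : exists j, u.2 (lift ord0 j) < n0.
  apply: exists_lt_of_sum_lt; rewrite (_ : d%:R * n0 = m%:R - n0); last first.
    by rewrite mE mulrDr mulr1 addrK mulrC.
  by have := target_top_gt; lra.
apply: lorenz_gt_const_mean th_items _ item_lt.
by rewrite (Uset_sum_items u_U) mE mulrC natr1.
Qed.

Lemma user_ratio_cvg lam a1 a2 u_th (u_q : R -> profile R m k) : in_Theta lam a1 a2 ->
  W_maximizer mu v lam a1 a2 u_th ->
  (forall beta, 0 < beta -> Uqua mu v beta (u_q beta)) ->
  ((\sum_i (u_q beta).1 i) / (\sum_i u_th.1 i)) @[beta --> +oo] --> ratio_limit R d.
Proof.
move=> lam_Theta u_th_max u_q_max; have [th_users _] := W_maximizerE lam_Theta u_th_max.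
apply: cvg_near_cst; near=> beta.
have beta_gt : c^-1 < beta by near: beta; apply: nbhs_pinfty_gt; rewrite num_real.
have beta_gt0 : 0 < beta by apply: lt_trans beta_gt; rewrite invr_gt0 c_gt0.
have [-> _] := Uqua_large beta_gt (u_q_max _ beta_gt0).
rewrite (eq_bigr (fun=> 1)) ?sumr_const ?card_ord // mE /excess /ratio_limit.
have := n0_gt0 R N0_gt0; have := dd_gt0 R d_gt0 => dd_pos n0_pos.
by field; rewrite !gt_eqF //; nra.
Unshelve. all: by end_near.
Qed.

End Optima.

Theorem proposition2 (R : realType) (N0 : nat) (hN0 : (1 <= N0)%N) :
  exists (mu : forall d : nat, 'I_(N0 * d.+1) -> 'I_d.+1 -> R)
         (v : forall d : nat, 'I_d.+1 -> R)
         (L : nat -> R),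
    (forall d i j, 0 <= mu d i j) /\
    (forall d (p q : 'I_d.+1), (p <= q)%N -> v d q <= v d p) /\
    (forall d p, 0 <= v d p) /\
    (L n @[n --> \oo] --> (5 / 6 : R)) /\
    forall (d : nat), (1 <= d)%N ->
    forall lam a1 a2 : R, in_Theta lam a1 a2 ->
      (exists u, W_maximizer (mu d) (v d) lam a1 a2 u) /\
      (forall beta : R, 0 < beta -> exists u, Uqua (mu d) (v d) beta u) /\
      forall u_th : profile R (N0 * d.+1) d.+1,
        W_maximizer (mu d) (v d) lam a1 a2 u_th ->
      forall u_q : R -> profile R (N0 * d.+1) d.+1,
        (forall beta : R, 0 < beta -> Uqua (mu d) (v d) beta (u_q beta)) ->
        (exists beta : R, 0 < beta /\
            lorenz_gt u_th.1 (u_q beta).1 /\ lorenz_gt u_th.2 (u_q beta).2) /\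
        (((\sum_(i < N0 * d.+1) (u_q beta).1 i) / (\sum_(i < N0 * d.+1) u_th.1 i))
          @[beta --> +oo] --> L d).
Proof.
exists (@mu_ex R N0), (@v_top R), (ratio_limit R).
split; first exact: mu_ex_ge0.
split; first exact: v_top_nonincr.
split; first exact: v_top_ge0.
split; first exact: ratio_limit_cvg.
move=> d d_gt0 lam a1 a2 lam_Theta.
split; first by exists (u_own R N0 d); apply: W_maximizer_u_own.
split; first exact: Uqua_exists.
move=> u_th u_th_max u_q u_q_max; split; last exact: user_ratio_cvg u_th_max u_q_max.
have c_pos := c_gt0 R N0 d.
exists ((Num.sqrt (dev_coef R N0 d))^-1 + 1); split; first by rewrite addr_gt0 ?invr_gt0.
apply: Uqua_large_lorenz lam_Theta u_th_max _ (u_q_max _ _); rewrite ?addr_gt0 ?invr_gt0 //.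
by rewrite ltrDl.
Qed.
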